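(* Every real algebraic number of degree $2$ is the limit value $\lim_{\lambda\to0}v_\lambda$ of some $2\times2$ absorbing game whose data $g,q,w$ are all rational. *)

From HB Require Import structures.
From mathcomp Require Import all_boot all_order all_algebra.
From mathcomp Require Import all_classical all_reals all_analysis.
Set Implicit Arguments. Unset Strict Implicit. Unset Printing Implicit Defensive.
Import Order.TTheory GRing.Theory Num.Theory.
Local Open Scope ring_scope.

Definition algebraic_of_degree (R : realType) (a : R) (n : nat) : Prop :=
  exists p : {poly rat},
    [/\ p \is monic, irreducible_poly p, size p = n.+1 & root (map_poly ratr p) a].

Definition mixed (R : realType) (m : nat) (x : 'I_m -> R) : Prop :=
  (forall i, 0 <= x i) /\ \sum_(i < m) x i = 1.

Definition payoff (R : realType) (m n : nat) (A : 'I_m -> 'I_n -> R)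
  (x : 'I_m -> R) (y : 'I_n -> R) : R :=
  \sum_(i < m) \sum_(j < n) x i * y j * A i j.

Definition is_game_value (R : realType) (m n : nat) (A : 'I_m -> 'I_n -> R) (v : R)
  : Prop :=
  (exists x, mixed x /\ forall y, mixed y -> v <= payoff A x y) /\
  (exists y, mixed y /\ forall x, mixed x -> payoff A x y <= v).

(* An absorbing game with action sets 'I_m and 'I_n: non-absorbing payoff g,
   absorption probability q (in [0,1]) and absorbing payoff w. *)
Record absorbing_game (m n : nat) := AbsGame {
  ag_g : 'I_m -> 'I_n -> rat;
  ag_q : 'I_m -> 'I_n -> rat;
  ag_w : 'I_m -> 'I_n -> rat }.

Definition absorbing_game_wf m n (G : absorbing_game m n) : Prop :=
  forall i j, 0 <= ag_q G i j <= 1.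

(* Shapley operator matrix at discount lambda and continuation value v:
   stage payoff g(i,j) weighted by lambda; with probability q(i,j) play is
   absorbed with payoff w(i,j) forever, otherwise the game restarts. *)
Definition shapley_matrix (R : realType) m n (G : absorbing_game m n)
  (lam v : R) : 'I_m -> 'I_n -> R :=
  fun i j => lam * ratr (ag_g G i j) +
    (1 - lam) * (ratr (ag_q G i j) * ratr (ag_w G i j)
                 + (1 - ratr (ag_q G i j)) * v).

Definition is_discounted_value (R : realType) m n (G : absorbing_game m n)
  (lam v : R) : Prop :=
  is_game_value (shapley_matrix G lam v) v.

From HB Require Import structures.
From mathcomp Require Import all_boot all_order all_algebra.
From mathcomp Require Import all_classical all_reals all_analysis.
From mathcomp Require Import ring lra.
Set Implicit Arguments.
Unset Strict Implicit.
Unset Printing Implicit Defensive.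

Import Order.TTheory GRing.Theory Num.Theory numFieldNormedType.Exports.
Local Open Scope classical_set_scope.
Local Open Scope ring_scope.

(* Consider the 2x2 quitting game paying U on the diagonal and L off it; its top row
   never absorbs, its bottom row absorbs with probability qC in the left column
   and qD in the right one.  With kC = lam + (1 - lam) qC and
   kD = lam + (1 - lam) qD, the row strategy proportional to (sqrt (kC kD), lam)
   and the column strategy proportional to (sqrt kD, sqrt kC) both equalize the
   Shapley matrix at v = (sqrt kD U + sqrt kC L) / (sqrt kD + sqrt kC), so v is
   the discounted value (unique, the Shapley operator being a
   (1 - lam)-contraction), and it tends to
   (sqrt qD U + sqrt qC L) / (sqrt qD + sqrt qC) as lam -> 0.
   A real root a of a rational quadratic satisfies (a - m)^2 = D with m, D
   rational.  Take qC = 1, qD = c^2 D, U = m + 1/c and L = m + c D, where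
   c = +-1/(D + 1) has the sign of a - m: then sqrt qD = c (a - m) and the
   limit is exactly a. *)

Section MatrixGames.
Variables (R : realType) (m n : nat).
Implicit Types (A B : 'I_m -> 'I_n -> R) (x : 'I_m -> R) (y : 'I_n -> R).

Lemma payoff_cst x y d : mixed x -> mixed y -> payoff (fun _ _ => d) x y = d.
Proof.
move=> [_ sx] [_ sy]; rewrite /payoff.
under eq_bigr do rewrite -mulr_suml -mulr_sumr sy mulr1.
by rewrite -mulr_suml sx mul1r.
Qed.

Lemma payoff_addc A x y d : mixed x -> mixed y ->
  payoff (fun i j => A i j + d) x y = payoff A x y + d.
Proof.
move=> mx my; rewrite -[in RHS](payoff_cst d mx my) /payoff -big_split.
by apply: eq_bigr => i _; rewrite -big_split; apply: eq_bigr => j _; rewrite mulrDr.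
Qed.

Lemma ler_payoff A B x y : mixed x -> mixed y ->
  (forall i j, A i j <= B i j) -> payoff A x y <= payoff B x y.
Proof.
move=> [x0 _] [y0 _] AB; apply: ler_sum => i _; apply: ler_sum => j _.
by rewrite ler_wpM2l ?mulr_ge0.
Qed.

Lemma game_value_le A B v w d : is_game_value A v -> is_game_value B w ->
  (forall i j, B i j <= A i j + d) -> w <= v + d.
Proof.
move=> [_ [y [my yopt]]] [[x [mx xopt]] _] BA.
apply: le_trans (xopt y my) _; apply: le_trans (ler_payoff mx my BA) _.
by rewrite payoff_addc // lerD2r yopt.
Qed.

Lemma payoff_col_equalizer A x y v :
  (forall j, \sum_(i < m) x i * A i j = v) -> \sum_(j < n) y j = 1 ->
  payoff A x y = v.
Proof.
move=> eqx sy; rewrite /payoff exchange_big /=.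
rewrite -[RHS]mul1r -sy mulr_suml; apply: eq_bigr => j _.
rewrite -(eqx j) mulr_sumr; apply: eq_bigr => i _.
by rewrite mulrCA mulrA.
Qed.

Lemma payoff_row_equalizer A x y v :
  (forall i, \sum_(j < n) y j * A i j = v) -> \sum_(i < m) x i = 1 ->
  payoff A x y = v.
Proof.
move=> eqy sx; rewrite /payoff -[RHS]mul1r -sx mulr_suml; apply: eq_bigr => i _.
by rewrite -(eqy i) mulr_sumr; apply: eq_bigr => j _; rewrite mulrA.
Qed.

Lemma equalizers_game_value A x y v : mixed x -> mixed y ->
  (forall j, \sum_(i < m) x i * A i j = v) ->
  (forall i, \sum_(j < n) y j * A i j = v) ->
  is_game_value A v.
Proof.
move=> mx my eqx eqy; split.
- by exists x; split=> // y' [_ sy']; rewrite (payoff_col_equalizer eqx sy').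
- by exists y; split=> // x' [_ sx']; rewrite (payoff_row_equalizer eqy sx').
Qed.

End MatrixGames.

Lemma sum_ord2 (V : nmodType) (F : 'I_2 -> V) : \sum_(i < 2) F i = F ord0 + F ord_max.
Proof. by rewrite big_ord_recl big_ord1; congr (_ + F _); apply: val_inj. Qed.

Lemma ord2P (i : 'I_2) : i = ord0 \/ i = ord_max.
Proof. by case: i => -[|[|//]] ?; [left | right]; apply: val_inj. Qed.

Definition mix2 (R : realType) (p r : R) (i : 'I_2) : R :=
  (if i == ord0 then p else r) / (p + r).

Lemma mix2_mixed (R : realType) (p r : R) :
  0 <= p -> 0 <= r -> 0 < p + r -> mixed (mix2 p r).
Proof.
move=> p0 r0 pr0; split.
  by move=> i; apply: divr_ge0; [case: ifP | exact: ltW].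
by rewrite sum_ord2 /mix2 eqxx -val_eqE /= -mulrDl divff ?gt_eqF.
Qed.

Definition absorb_weight (R : realType) (lam q : R) := lam + (1 - lam) * q.

Section DiscountedValue.
Variables (R : realType) (m n : nat) (G : absorbing_game m n).
Hypothesis G_wf : absorbing_game_wf G.

Lemma shapley_matrix_contraction (lam v1 v2 : R) i j : 0 <= lam <= 1 ->
  shapley_matrix G lam v2 i j <= shapley_matrix G lam v1 i j + (1 - lam) * `|v2 - v1|.
Proof.
move=> /andP[lam0 lam1]; have /andP[q0 q1] := G_wf i j.
rewrite -(ler0q R) in q0; rewrite -(ler_rat R) rmorph1 in q1.
set q := ratr (ag_q G i j) in q0 q1 *.
have -> : shapley_matrix G lam v2 i j =
    shapley_matrix G lam v1 i j + (1 - lam) * ((1 - q) * (v2 - v1)).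
  by rewrite /shapley_matrix -/q; ring.
rewrite lerD2l ler_wpM2l ?subr_ge0 //.
have := ler_norm (v2 - v1); have := normr_ge0 (v2 - v1); nra.
Qed.

Lemma discounted_value_unique (lam v1 v2 : R) : 0 < lam <= 1 ->
  is_discounted_value G lam v1 -> is_discounted_value G lam v2 -> v1 = v2.
Proof.
move=> /andP[lam0 lam1] val1 val2.
have lam01 : 0 <= lam <= 1 by rewrite ltW.
have le21 := game_value_le val1 val2 (fun i j => shapley_matrix_contraction v1 v2 i j lam01).
have le12 := game_value_le val2 val1 (fun i j => shapley_matrix_contraction v2 v1 i j lam01).
rewrite distrC in le12.
have contr : `|v2 - v1| <= (1 - lam) * `|v2 - v1| by rewrite ler_norml; apply/andP; split; lra.
apply/eqP; rewrite eq_sym -subr_eq0 -normr_eq0; apply/eqP.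
have := normr_ge0 (v2 - v1); nra.
Qed.

Definition is_limit_value (a : R) : Prop :=
  absorbing_game_wf G /\
  (forall lam : R, 0 < lam <= 1 -> exists v : R, is_discounted_value G lam v) /\
  (forall vl : R -> R,
     (forall lam : R, 0 < lam <= 1 -> is_discounted_value G lam (vl lam)) ->
     vl lam @[lam --> 0^'+] --> a).

Lemma is_limit_valueP (w : R -> R) (a : R) :
  (forall lam : R, 0 < lam <= 1 -> is_discounted_value G lam (w lam)) ->
  w lam @[lam --> 0^'+] --> a -> is_limit_value a.
Proof.
move=> w_val w_cvg; split=> //; split=> [lam lam01 | vl vl_val].
  by exists (w lam); apply: w_val.
apply: cvg_trans w_cvg; apply: near_eq_cvg; near=> lam.
have lam01 : 0 < lam <= 1.
  apply/andP; split; first by near: lam; exact: nbhs_right_gt.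
  by apply/ltW; near: lam; apply: nbhs_right_lt; exact: ltr01.
exact: (discounted_value_unique lam01 (w_val _ lam01) (vl_val _ lam01)).
Unshelve. all: by end_near.
Qed.

Lemma shapley_matrix_same_payoff (lam v : R) i j : ag_g G i j = ag_w G i j ->
  shapley_matrix G lam v i j =
    v + absorb_weight lam (ratr (ag_q G i j)) * (ratr (ag_w G i j) - v).
Proof. by move=> gw; rewrite /shapley_matrix /absorb_weight gw; ring. Qed.

End DiscountedValue.

Lemma absorb_weight_ge (R : realType) (lam q : R) :
  lam <= 1 -> 0 <= q -> lam <= absorb_weight lam q.
Proof. by move=> lam1 q0; rewrite lerDl mulr_ge0 ?subr_ge0. Qed.

Lemma absorb_weight0 (R : realType) (q : R) : absorb_weight 0 q = q.
Proof. by rewrite /absorb_weight subr0 mul1r add0r. Qed.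

Lemma absorb_weight_continuous (R : realType) (q : R) :
  continuous (fun lam => absorb_weight lam q).
Proof.
move=> lam; apply: cvgD; first exact: cvg_id.
by apply: cvgM; [apply: cvgB; [exact: cvg_cst | exact: cvg_id] | exact: cvg_cst].
Qed.

Definition diag_payoff (U L : rat) (i j : 'I_2) : rat := if i == j then U else L.

Definition quit_prob (qC qD : rat) (i j : 'I_2) : rat :=
  if i == ord0 then 0 else if j == ord0 then qC else qD.

Definition quitting_game (U L qC qD : rat) : absorbing_game 2 2 :=
  AbsGame (diag_payoff U L) (quit_prob qC qD) (diag_payoff U L).

Section QuittingGame.
Variables (R : realType) (U L qC qD : rat).
Hypotheses (qC01 : 0 <= qC <= 1) (qD01 : 0 <= qD <= 1).

Lemma quitting_game_wf : absorbing_game_wf (quitting_game U L qC qD).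
Proof. by move=> i j; rewrite /= /quit_prob; case: ifP => // _; case: ifP. Qed.

Definition quitting_value (lam : R) : R :=
  let a := Num.sqrt (absorb_weight lam (ratr qC)) in
  let b := Num.sqrt (absorb_weight lam (ratr qD)) in
  (b * ratr U + a * ratr L) / (b + a).

Lemma quitting_value_discounted (lam : R) : 0 < lam <= 1 ->
  is_discounted_value (quitting_game U L qC qD) lam (quitting_value lam).
Proof.
move=> /andP[lam0 lam1]; rewrite /quitting_value.
set a := Num.sqrt (absorb_weight lam (ratr qC)).
set b := Num.sqrt (absorb_weight lam (ratr qD)).
have weight_gt0 q : 0 <= q <= 1 -> 0 < absorb_weight lam (ratr q).
  by case/andP=> q0 _; apply: lt_le_trans (absorb_weight_ge _ _) => //; rewrite ler0q.
have a0 : 0 < a by rewrite sqrtr_gt0 weight_gt0.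
have b0 : 0 < b by rewrite sqrtr_gt0 weight_gt0.
have aa : absorb_weight lam (ratr qC) = a ^+ 2 by rewrite sqr_sqrtr // ltW // weight_gt0.
have bb : absorb_weight lam (ratr qD) = b ^+ 2 by rewrite sqr_sqrtr // ltW // weight_gt0.
have ab0 : a * b + lam != 0 by rewrite gt_eqF ?addr_gt0 ?mulr_gt0.
have ba0 : b + a != 0 by rewrite gt_eqF ?addr_gt0.
apply: (equalizers_game_value (x := mix2 (a * b) lam) (y := mix2 b a)).
- by apply: mix2_mixed; rewrite ?mulr_ge0 ?ltW ?addr_gt0 ?mulr_gt0.
- by apply: mix2_mixed; rewrite ?ltW ?addr_gt0.
- move=> j; rewrite sum_ord2 !shapley_matrix_same_payoff //.
  case: (ord2P j) => ->; rewrite /= /mix2 /diag_payoff /quit_prob ?eqxx -?val_eqE /=;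
    by rewrite ?rmorph0 ?aa ?bb /absorb_weight; field; rewrite ab0 ba0.
- move=> i; rewrite sum_ord2 !shapley_matrix_same_payoff //.
  case: (ord2P i) => ->; rewrite /= /mix2 /diag_payoff /quit_prob ?eqxx -?val_eqE /=;
    by rewrite ?rmorph0 ?aa ?bb /absorb_weight; field; rewrite ba0.
Qed.

Lemma quitting_value_cvg : 0 < qC + qD ->
  quitting_value lam @[lam --> 0^'+] --> quitting_value 0.
Proof.
move=> qCD0; apply: cvg_at_right_filter; rewrite /quitting_value.
have sqrt_weight_cvg (q : R) :
    Num.sqrt (absorb_weight lam q) @[lam --> 0] --> Num.sqrt (absorb_weight 0 q).
  by apply: continuous_cvg; [exact: sqrt_continuous | exact: absorb_weight_continuous].
apply: cvgM; first by apply: cvgD; apply: cvgMr_tmp.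
apply: cvgV; last by apply: cvgD.
rewrite !absorb_weight0 paddr_eq0 ?sqrtr_ge0 // !sqrtr_eq0 !lerq0.
by apply/negP => /andP[]; lra.
Qed.

Lemma quitting_game_limit_value : 0 < qC + qD ->
  is_limit_value (quitting_game U L qC qD) (quitting_value 0).
Proof.
move=> qCD0; apply: (is_limit_valueP quitting_game_wf quitting_value_discounted).
exact: quitting_value_cvg.
Qed.

End QuittingGame.

Lemma quitting_game_limit_value_surd (R : realType) (a : R) (m D c : rat) :
  (a - ratr m) ^+ 2 = ratr D -> c != 0 -> 0 <= ratr c * (a - ratr m) ->
  c ^+ 2 * D <= 1 ->
  is_limit_value (quitting_game (m + c^-1) (m + c * D) 1 (c ^+ 2 * D)) a.
Proof.
move=> sqD c0 sign_c cD1.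
have D0 : 0 <= D by rewrite -(ler0q R) -sqD sqr_ge0.
have q01 : 0 <= c ^+ 2 * D <= 1 by rewrite cD1 andbT mulr_ge0 ?sqr_ge0.
have qCD0 : 0 < 1 + c ^+ 2 * D by case/andP: q01; lra.
suff <- : quitting_value (m + c^-1) (m + c * D) 1 (c ^+ 2 * D) (0 : R) = a.
  by apply: quitting_game_limit_value; rewrite // ler01 lexx.
have sqrt_q : Num.sqrt (ratr (c ^+ 2 * D)) = ratr c * (a - ratr m) :> R.
  have -> : ratr (c ^+ 2 * D) = (ratr c * (a - ratr m)) ^+ 2 :> R.
    by rewrite exprMn sqD -rmorphXn -rmorphM.
  by rewrite sqrtr_sqr ger0_norm.
have U_eq : ratr (m + c^-1) = ratr m + (ratr c)^-1 :> R by rewrite -fmorphV -rmorphD.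
have L_eq : ratr (m + c * D) = ratr m + ratr c * (a - ratr m) ^+ 2 :> R.
  by rewrite sqD -rmorphM -rmorphD.
rewrite /quitting_value !absorb_weight0 rmorph1 sqrtr1 sqrt_q U_eq L_eq.
have rc0 : ratr c != 0 :> R by rewrite fmorph_eq0.
have s10 : ratr c * (a - ratr m) + 1 != 0 :> R by rewrite gt_eqF ?ltr_pwDr.
by field; rewrite s10 rc0.
Qed.

Lemma limit_value_of_surd (R : realType) (a : R) (m D : rat) :
  (a - ratr m) ^+ 2 = ratr D -> exists G : absorbing_game 2 2, is_limit_value G a.
Proof.
move=> sqD; have D0 : 0 <= D by rewrite -(ler0q R) -sqD sqr_ge0.
pose c := (D + 1)^-1; have c0 : 0 < c by rewrite invr_gt0 ltr_wpDl.
have cD1 : c ^+ 2 * D <= 1.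
  by rewrite exprVn mulrC ler_pdivrMr ?exprn_gt0 ?ltr_wpDl // mul1r; nra.
have [s [s_neq0 s_sign s_sq]] :
    exists s : rat, [/\ s != 0, 0 <= ratr s * (a - ratr m) & s ^+ 2 = c ^+ 2].
  have [le_ma | lt_am] := lerP (ratr m) a; [exists c | exists (- c)].
    by rewrite gt_eqF // mulr_ge0 ?ler0q ?subr_ge0 // ltW.
  rewrite oppr_eq0 gt_eqF // sqrrN rmorphN mulNr -mulrN.
  by rewrite mulr_ge0 ?ler0q ?oppr_ge0 ?subr_le0 // ltW.
exists (quitting_game (m + s^-1) (m + s * D) 1 (s ^+ 2 * D)).
by apply: quitting_game_limit_value_surd; rewrite // s_sq.
Qed.

Lemma quadratic_root_complete_square (R : realType) (p : {poly rat}) (a : R) :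
  p \is monic -> size p = 3 -> root (map_poly ratr p) a ->
  exists m D : rat, (a - ratr m) ^+ 2 = ratr D.
Proof.
move=> mp sp; rewrite [p](FieldMonic.deg2_poly_canonical _ sp mp) //.
rewrite /root rmorphB rmorphXn rmorphD /= map_polyX !map_polyC !hornerE /= subr_eq0.
by move=> /eqP sq; exists (- (p`_1 / 2)), ((p`_1 ^+ 2 - 4 * p`_0) / 4); rewrite rmorphN opprK.
Qed.

Theorem mainTheorem8 (R : realType) (a : R) :
  algebraic_of_degree a 2 ->
  exists G : absorbing_game 2 2,
    absorbing_game_wf G /\
    (forall lam : R, 0 < lam <= 1 -> exists v : R, is_discounted_value G lam v) /\
    (forall vl : R -> R,
       (forall lam : R, 0 < lam <= 1 -> is_discounted_value G lam (vl lam)) ->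
       vl lam @[lam --> 0^'+] --> a).
Proof.
move=> [p [monic_p _ size_p root_a]].
have [m [D sqD]] := quadratic_root_complete_square monic_p size_p root_a.
exact: limit_value_of_surd sqD.
Qed.
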